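(* Let $\mathcal{W}$ be a nonempty set and let $\mathcal{R}$ be a set of binary relations on $\mathcal{W}$ (subsets of $\mathcal{W}\times\mathcal{W}$) that is closed under composition $\circ$, where $r \circ r' = \{(w,w') : \exists w'' \in \mathcal{W},\ (w,w'') \in r \text{ and } (w'',w') \in r'\}$. Suppose $\mathcal{R}$ contains a relation $r$ of nontrivial finite order, i.e., there is an integer $n$ with $1 < n < \infty$ such that $r^n = r \circ \cdots \circ r$ ($n$ times) equals the identity relation $e = \{(w,w) : w \in \mathcal{W}\}$ and $r^k \neq e$ for $0<k<n$. Let $F$ be a field of characteristic $0$ (e.g. $\mathbb{R}$ or $\mathbb{C}$). Then there is no $F$-vector space $\mathbb{V}$ and map $\varphi : \mathcal{W} \to \mathbb{V}$ such that $(\mathcal{W}, \mathcal{R}, \mathbb{V}, \varphi)$ is a relation-as-vector representation that well-represents $\mathcal{R}$.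
   Context: Given a set of words $\mathcal{W}$, a set $\mathcal{R}$ of binary relations on $\mathcal{W}$, a vector space $\mathbb{V}$ and a map $\varphi : \mathcal{W} \to \mathbb{V}$, the tuple $(\mathcal{W}, \mathcal{R}, \mathbb{V}, \varphi)$ is called a relation-as-vector representation if for every $r \in \mathcal{R}$ and all $a,b,c,d \in \mathcal{W}$ with $(a,b) \in r$ and $(c,d) \in r$ one has $\varphi(b) - \varphi(a) = \varphi(d) - \varphi(c)$; this common vector is denoted $\varphi(r) = \varphi(b)-\varphi(a)$. The set $\mathcal{R}$ is well-represented by such a representation if $\varphi(r) \neq \varphi(r')$ for all distinct $r, r' \in \mathcal{R}$. The order of $r$ refers to its order as an element of $(\mathcal{R}, \circ)$ with identity the identity relation. *)

From HB Require Import structures.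
From mathcomp Require Import all_boot all_order all_algebra.
Set Implicit Arguments. Unset Strict Implicit. Unset Printing Implicit Defensive.
Import GRing.Theory.
Local Open Scope ring_scope.

Definition relation (W : Type) := W -> W -> Prop.

Definition rel_id (W : Type) : relation W := fun w w' => w = w'.

Definition rel_comp (W : Type) (r r' : relation W) : relation W :=
  fun w w' => exists w'', r w w'' /\ r' w'' w'.

Fixpoint rel_pow (W : Type) (r : relation W) (n : nat) : relation W :=
  match n with
  | O => @rel_id W
  | S k => rel_comp r (rel_pow r k)
  end.

Definition comp_closed (W : Type) (R : relation W -> Prop) : Prop :=
  forall r r', R r -> R r' -> R (rel_comp r r').

Definition has_nontrivial_finite_order (W : Type) (r : relation W) : Prop :=
  exists n : nat, (1 < n)%N /\ rel_pow r n = @rel_id W /\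
    (forall k : nat, (0 < k)%N -> (k < n)%N -> rel_pow r k <> @rel_id W).

Definition rel_as_vec_rep (W : Type) (R : relation W -> Prop)
  (F : fieldType) (V : lmodType F) (phi : W -> V) : Prop :=
  forall r, R r -> forall a b c d, r a b -> r c d -> phi b - phi a = phi d - phi c.

Definition well_represents (W : Type) (R : relation W -> Prop)
  (F : fieldType) (V : lmodType F) (phi : W -> V) : Prop :=
  forall r r', R r -> R r' -> r <> r' ->
    forall a b c d, r a b -> r' c d -> phi b - phi a <> phi d - phi c.

From HB Require Import structures.
From mathcomp Require Import all_boot all_order all_algebra.
From Stdlib Require Import FunctionalExtensionality PropExtensionality.
Import GRing.Theory.
Local Open Scope ring_scope.

(* Since [r ^ n = e] relates any point to itself, [r] has an edge and [e] lies
   in [R]. Displacements add up along chains, so [r ^ n = e] forces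
   [n *: phi(r) = phi(e) = 0]; in characteristic 0 this gives
   [phi(r) = phi(e)], although [r <> e]. *)

Lemma rel_comp_id (W : Type) (r : relation W) : rel_comp r (@rel_id W) = r.
Proof.
apply: functional_extensionality => a; apply: functional_extensionality => b.
apply: propositional_extensionality; split=> [[c [rac <-]] // | rab].
by exists b.
Qed.

Lemma rel_pow1 (W : Type) (r : relation W) : rel_pow r 1 = r.
Proof. exact: rel_comp_id. Qed.

Lemma rel_pow_closed (W : Type) (R : relation W -> Prop) (r : relation W) k :
  comp_closed R -> R r -> R (rel_pow r k.+1).
Proof.
move=> R_comp Rr; elim: k => [|k IHk]; first by rewrite rel_pow1.
exact: R_comp.
Qed.

Lemma rel_pow_disp {W : Type} {V : zmodType} {phi : W -> V} {r : relation W}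
    {v : V} :
  (forall a b, r a b -> phi b - phi a = v) ->
  forall k a b, rel_pow r k a b -> phi b - phi a = v *+ k.
Proof.
move=> r_disp; elim=> [|k IHk] a b /= => [-> | [c [rac rcb]]].
  by rewrite subrr.
by rewrite mulrS -(IHk c b rcb) -(r_disp a c rac) addrC addrA subrK.
Qed.

Lemma natmul_eq0_pchar0 {F : fieldType} {V : lmodType F} {v : V} {n : nat} :
  [pchar F] =i pred0 -> (0 < n)%N -> v *+ n = 0 -> v = 0.
Proof.
move=> pchar0 n_gt0; rewrite -scaler_nat => /eqP.
by rewrite scaler_eq0 (pcharf0P F).1 // eqn0Ngt n_gt0 => /eqP.
Qed.

Theorem theorem1 (W : Type) (R : relation W -> Prop) (F : fieldType) :
  inhabited W ->
  comp_closed R ->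
  (exists r, R r /\ has_nontrivial_finite_order r) ->
  [pchar F]%R =i pred0 ->
  forall (V : lmodType F) (phi : W -> V),
    ~ (rel_as_vec_rep R phi /\ well_represents R phi).
Proof.
move=> [w0] R_comp [r [Rr [n [n_gt1 [rn_id r_ord]]]]] pchar0 V phi [rep wr].
have r_neq_id : r <> @rel_id W.
  by move=> r_id; apply: (r_ord 1%N) => //; rewrite rel_pow1.
have n_gt0 : (0 < n)%N by apply: ltn_trans n_gt1.
have R_id : R (@rel_id W) by rewrite -rn_id -(prednK n_gt0); exact: rel_pow_closed.
have [w1 [r01 _]] : rel_pow r n.-1.+1 w0 w0 by rewrite prednK // rn_id.
have disp := rel_pow_disp (fun a b rab => rep r Rr a b w0 w1 rab r01).
have nv0 : (phi w1 - phi w0) *+ n = 0 by rewrite -(disp n w0 w0) ?subrr ?rn_id.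
apply: (wr r _ Rr R_id r_neq_id w0 w1 w0 w0 r01 erefl).
by rewrite subrr (natmul_eq0_pchar0 pchar0 n_gt0 nv0).
Qed.
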